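(* For every integer $k$ (positive, zero or negative) there exists a tree $T$ with $\gamma^{0}_{st}(T)=k$.
   Context: For a vertex $v$ of a graph $G=(V,E)$, $N(v)$ is its open neighborhood, and for $f:V\to\mathbb{R}$ and $B\subseteq V$ write $f(B)=\sum_{v\in B}f(v)$; $f(V)$ is the weight of $f$. An inverse signed total dominating function (ISTDF) of $G$ is a function $f:V\to\{-1,1\}$ such that $f(N(v))\le 0$ for every $v\in V$. The inverse signed total domination number $\gamma^{0}_{st}(G)$ is the maximum weight of an ISTDF of $G$. *)

From HB Require Import structures.
From mathcomp Require Import all_boot all_order all_algebra.
Set Implicit Arguments. Unset Strict Implicit. Unset Printing Implicit Defensive.
Import Order.TTheory GRing.Theory Num.Theory.
Local Open Scope ring_scope.

Definition simple_graph (T : finType) (e : rel T) : Prop :=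
  symmetric e /\ irreflexive e.

Definition is_tree (T : finType) (e : rel T) : Prop :=
  (0 < #|T|)%N
  /\ (forall x y : T, connect e x y)
  /\ (forall c : seq T, uniq c -> (2 < size c)%N -> ~~ cycle e c).

Definition istdf (T : finType) (e : rel T) (f : T -> int) : Prop :=
  (forall v, f v = 1 \/ f v = -1) /\
  (forall v, \sum_(u | e v u) f u <= 0).

Definition weight (T : finType) (f : T -> int) : int := \sum_(v : T) f v.

Definition is_istd_number (T : finType) (e : rel T) (k : int) : Prop :=
  (exists f, istdf e f /\ weight f = k) /\
  (forall f, istdf e f -> weight f <= k).

From HB Require Import structures.
From mathcomp Require Import all_boot all_order all_algebra zify ring.
Set Implicit Arguments. Unset Strict Implicit. Unset Printing Implicit Defensive.
Import Order.TTheory GRing.Theory Num.Theory.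
Local Open Scope ring_scope.

(* The witnesses are spiders: a center c with pendant leaves indexed by L and
   arms indexed by I, each arm carrying pendant twigs indexed by J.  In an ISTDF
   every vertex adjacent to a pendant vertex gets -1, so c and all arms are -1;
   the neighbourhood condition at an arm bounds the weight of its twigs by 1, and
   a leaf contributes at most 1.  As many leaves as arms and single twigs give weight
   #|L| - 1 >= 0; a single leaf and pairs of twigs, whose weight is even and hence
   at most 0, give weight -#|I| < 0. *)

Definition undirected (T : Type) (par : rel T) : rel T :=
  fun x y => par x y || par y x.

Section TreeOfParent.
Variables (T : finType) (par : rel T) (depth : T -> nat) (root : T).
Hypothesis depth_par : forall p x, par p x -> depth x = (depth p).+1.
Hypothesis par_uniq : forall p q x, par p x -> par q x -> p = q.
Hypothesis par_exists : forall x, x != root -> exists p, par p x.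

Let adj := undirected par.

Lemma undirected_simple : simple_graph adj.
Proof.
split=> [x y|x]; first by rewrite /adj /undirected orbC.
by rewrite /adj /undirected orbb; apply/negP => /depth_par /n_Sn.
Qed.

Lemma connect_root x : connect adj x root.
Proof.
elim: {x}(depth x) {-2}x (erefl (depth x)) => [|n IH] x dx;
  have [-> //|/par_exists [p pxp]] := eqVneq x root.
  by move: dx; rewrite (depth_par pxp).
apply: connect_trans (IH p _); last by move: dx; rewrite (depth_par pxp) => -[].
by apply: connect1; rewrite /adj /undirected pxp orbT.
Qed.

(* A deepest vertex of a cycle has both cycle-neighbours above it, i.e. two parents. *)
Lemma undirected_acyclic (c : seq T) : uniq c -> (2 < size c)%N -> ~~ cycle adj c.
Proof.
case: c => [//|x0 c0] uc sc; apply/negP => cc.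
case: (arg_maxnP depth (mem_head x0 c0)) => x xc x_max.
have [i s def_s] := rot_to xc.
have {uc} : uniq (x :: s) by rewrite -def_s rot_uniq.
have {cc} : cycle adj (x :: s) by rewrite -def_s rot_cycle.
have {sc} : (2 < size (x :: s))%N by rewrite -def_s size_rot.
have {x_max def_s xc} x_deepest y : y \in x :: s -> (depth y <= depth x)%N.
  by rewrite -def_s mem_rot; apply: x_max.
case/lastP: s x_deepest => [//|[//|y u] z] x_deepest _.
rewrite /= rcons_path last_rcons => /and3P [xy _ zx] /andP [_ /andP [yNuz _]].
have parent_of w : adj x w -> w \in x :: rcons (y :: u) z -> par w x.
  case/orP=> [/depth_par dw /x_deepest|//]; by rewrite dw ltnn.
have pyx : par y x by apply: parent_of; rewrite ?inE ?eqxx ?orbT.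
have pzx : par z x.
  apply: parent_of; last by rewrite inE mem_rcons mem_head orbT.
  by rewrite /adj /undirected orbC.
by move: yNuz; rewrite (par_uniq pyx pzx) mem_rcons mem_head.
Qed.

Lemma undirected_tree : is_tree adj.
Proof.
split; first by apply/card_gt0P; exists root.
split; last exact: undirected_acyclic.
move=> x y; apply: connect_trans (connect_root x) _.
by rewrite (sym_connect_sym (proj1 undirected_simple)) connect_root.
Qed.

End TreeOfParent.

Lemma sum_const_int (T : finType) (x : int) : \sum_(t : T) x = #|T|%:Z * x.
Proof. by rewrite sumr_const -mulr_natl natz. Qed.

Lemma istdf_pendant (T : finType) (e : rel T) (f : T -> int) (v u : T) :
  istdf e f -> \sum_(w | e v w) f w = f u -> f u = -1.
Proof. by case=> /(_ u) [] fu /(_ v) + nbr_v; rewrite nbr_v fu. Qed.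

Section Spider.
Variables L I J : finType.

Definition spider : finType := (((unit + L) + I) + I * J)%type.
Definition center : spider := inl (inl (inl tt)).
Definition leaf l : spider := inl (inl (inr l)).
Definition arm i : spider := inl (inr i).
Definition twig i j : spider := inr (i, j).

Definition spider_par (p x : spider) : bool :=
  match p, x with
  | inl (inl (inl _)), inl (inl (inr _)) => true
  | inl (inl (inl _)), inl (inr _) => true
  | inl (inr i), inr (i', _) => i == i'
  | _, _ => false
  end.

Definition spider_depth (x : spider) : nat :=
  match x with
  | inl (inl (inl _)) => 0 | inl (inl (inr _)) => 1 | inl (inr _) => 1 | inr _ => 2
  end.

Definition spider_adj := undirected spider_par.

Lemma spider_simple_tree : simple_graph spider_adj /\ is_tree spider_adj.
Proof.
have depth_par : forall p x, spider_par p x -> spider_depth x = (spider_depth p).+1.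
  by case=> [[[?|?]|?]|[??]] [[[?|?]|?]|[??]].
have par_uniq : forall p q x, spider_par p x -> spider_par q x -> p = q.
  by case=> [[[[]|?]|?]|[??]] [[[[]|?]|?]|[??]] [[[?|?]|?]|[??]] //= /eqP-> /eqP->.
have par_exists : forall x, x != center -> exists p, spider_par p x.
  case=> [[[[]|l]|i]|[i j]]; rewrite ?eqxx // => _.
  - by exists center.
  - by exists center.
  - by exists (arm i) => /=.
split; first exact: undirected_simple depth_par.
exact: undirected_tree depth_par par_uniq par_exists.
Qed.

Lemma spider_istd_tree (k : int) :
  is_istd_number spider_adj k ->
  exists (T : finType) (e : rel T), simple_graph e /\ is_tree e /\ is_istd_number e k.
Proof. by have [? ?] := spider_simple_tree; exists spider, spider_adj. Qed.

Lemma sum_spider (F : spider -> int) :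
  \sum_v F v = F center + \sum_l F (leaf l) + \sum_i F (arm i) + \sum_i \sum_j F (twig i j).
Proof.
rewrite !big_sumType (big_pred1 tt) => [|[]//]; rewrite pair_bigA.
by congr (_ + _); apply: eq_bigr => -[].
Qed.

Section Neighbourhoods.
Variable f : spider -> int.
Local Notation nbr v := (\sum_(w | spider_adj v w) f w).

Lemma nbr_center : nbr center = \sum_l f (leaf l) + \sum_i f (arm i).
Proof. by rewrite big_mkcond sum_spider /= !big1_eq add0r addr0. Qed.

Lemma nbr_leaf l : nbr (leaf l) = f center.
Proof. by rewrite big_mkcond sum_spider /= !big1_eq !addr0. Qed.

Lemma nbr_arm i : nbr (arm i) = f center + \sum_j f (twig i j).
Proof.
rewrite big_mkcond sum_spider /spider_adj /undirected /= !big1_eq !addr0.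
rewrite (bigD1 i) //= eqxx [\sum_(i0 | i0 != i) _]big1 ?addr0 //.
by move=> i' /negbTE; rewrite eq_sym => ->; rewrite big1_eq.
Qed.

Lemma nbr_twig i j : nbr (twig i j) = f (arm i).
Proof.
rewrite big_mkcond sum_spider /spider_adj /undirected /= !big1_eq add0r addr0.
rewrite (bigD1 i) //= eqxx [\sum_(i0 | i0 != i) _]big1 ?addr0 //.
by move=> i' /negbTE ->.
Qed.
End Neighbourhoods.

Section Witness.
Variable g : J -> int.

Definition spider_fun (v : spider) : int :=
  match v with
  | inl (inl (inl _)) => -1 | inl (inl (inr _)) => 1 | inl (inr _) => -1
  | inr (_, j) => g j
  end.

Lemma spider_fun_istdf :
  (forall j, g j = 1 \/ g j = -1) -> (#|L| <= #|I|)%N -> \sum_j g j <= 1 ->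
  istdf spider_adj spider_fun.
Proof.
move=> g_pm1 card_LI g_le1.
split=> [[[[[]|l]|i]|[i j]] /=|]; [by right|by left|by right|exact: g_pm1|].
case=> [[[[]|l]|i]|[i j]].
- by rewrite nbr_center /= !sum_const_int; lia.
- by rewrite nbr_leaf.
- by rewrite nbr_arm /= addrC subr_le0.
- by rewrite nbr_twig.
Qed.

Lemma weight_spider_fun :
  weight spider_fun = -1 + #|L|%:Z + #|I|%:Z * (\sum_j g j - 1).
Proof. by rewrite /weight sum_spider /= !sum_const_int; ring. Qed.
End Witness.

Section SpiderIstdf.
Variables (l0 : L) (j0 : J).

Lemma istdf_center f : istdf spider_adj f -> f center = -1.
Proof. by move=> hf; apply: istdf_pendant hf (nbr_leaf f l0). Qed.

Lemma istdf_arm f i : istdf spider_adj f -> f (arm i) = -1.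
Proof. by move=> hf; apply: istdf_pendant hf (nbr_twig f i j0). Qed.

Lemma istdf_twigs_le1 f i : istdf spider_adj f -> \sum_j f (twig i j) <= 1.
Proof.
move=> hf; have := proj2 hf (arm i).
by rewrite nbr_arm istdf_center // addrC subr_le0.
Qed.

Lemma spider_weight_le (s : int) :
  (forall h : J -> int, (forall j, h j = 1 \/ h j = -1) ->
     \sum_j h j <= 1 -> \sum_j h j <= s) ->
  forall f, istdf spider_adj f -> weight f <= -1 + #|L|%:Z + #|I|%:Z * (s - 1).
Proof.
move=> s_max f hf; rewrite /weight sum_spider istdf_center //.
have leaves : \sum_l f (leaf l) <= #|L|%:Z.
  rewrite -[_%:Z]mulr1 -sum_const_int; apply: ler_sum => l _.
  by case: (proj1 hf (leaf l)) => ->.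
have twigs : \sum_i \sum_j f (twig i j) <= #|I|%:Z * s.
  rewrite -sum_const_int; apply: ler_sum => i _.
  apply: (s_max (fun j => f (twig i j))) (istdf_twigs_le1 i hf) => j.
  exact: (proj1 hf (twig i j)).
have arms : \sum_i f (arm i) = - #|I|%:Z.
  rewrite (eq_bigr (fun=> -1)) => [|i _]; last exact: istdf_arm.
  by rewrite sum_const_int mulrN1.
rewrite arms; lia.
Qed.

Lemma spider_istd_number (g : J -> int) :
  (forall j, g j = 1 \/ g j = -1) -> \sum_j g j <= 1 ->
  (forall h : J -> int, (forall j, h j = 1 \/ h j = -1) ->
     \sum_j h j <= 1 -> \sum_j h j <= \sum_j g j) ->
  (#|L| <= #|I|)%N ->
  is_istd_number spider_adj (-1 + #|L|%:Z + #|I|%:Z * (\sum_j g j - 1)).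
Proof.
move=> g_pm1 g_le1 g_max card_LI; split; last exact: spider_weight_le g_max.
by exists (spider_fun g); rewrite weight_spider_fun; split; first exact: spider_fun_istdf.
Qed.
End SpiderIstdf.
End Spider.

Lemma istd_number_spider_nonneg (n : nat) :
  is_istd_number (@spider_adj 'I_n.+1 'I_n.+1 unit) n.
Proof.
have -> : n%:Z = -1 + #|'I_n.+1|%:Z + #|'I_n.+1|%:Z * (\sum_(j : unit) 1 - 1).
  by rewrite card_ord sum_const_int card_unit; lia.
apply: (spider_istd_number ord0 tt) => //; first by left.
- by rewrite sum_const_int card_unit.
- by move=> h _; rewrite sum_const_int card_unit.
Qed.

Lemma istd_number_spider_neg (n : nat) :
  is_istd_number (@spider_adj unit 'I_n.+1 bool) (Negz n).
Proof.
pose g (b : bool) : int := if b then 1 else -1.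
have -> : Negz n = -1 + #|{: unit}|%:Z + #|'I_n.+1|%:Z * (\sum_b g b - 1).
  by rewrite card_ord card_unit big_bool /g /= NegzE; lia.
apply: (spider_istd_number tt true).
- by case; [left|right].
- by rewrite big_bool.
-
  move=> h h_pm1; rewrite !big_bool /g /=.
  by case: (h_pm1 true) (h_pm1 false) => -> [] ->.
- by rewrite card_unit card_ord.
Qed.

Theorem proposition4p1 (k : int) :
  exists (T : finType) (e : rel T),
    simple_graph e /\ is_tree e /\ is_istd_number e k.
Proof.
case: k => n.
- exact: spider_istd_tree (istd_number_spider_nonneg n).
- exact: spider_istd_tree (istd_number_spider_neg n).
Qed.
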